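(* Let $q$ be a positive integer and let $f(r)=\frac{4}{\pi^2}\sum_{k\ge0}\frac{\sec((2k+1)\pi r)}{(2k+1)^2}$. Then \[ f(1/q)=\begin{cases}1/2 & \text{if } q\equiv 0 \pmod 4,\\ 1/2-1/q & \text{if } q\equiv 1 \pmod 4,\\ \infty & \text{if } q\equiv 2 \pmod 4,\\ 1/2+1/q & \text{if } q\equiv 3 \pmod 4,\end{cases} \] where the value $\infty$ means that $1/q$ is a singularity of $f$.
   Context: The function $f$ is defined by the series $f(r)=\frac{4}{\pi^2}\sum_{k\ge0}\frac{\sec((2k+1)\pi r)}{(2k+1)^2}$, with $\sec x=1/\cos x$. Equivalently $f(r)=\tfrac12(\psi(r)-\psi(r+1))$ where $\psi(r)=\frac{4}{\pi^2}\sum_{n\ge1}\frac{\sec(n\pi r)}{n^2}$. The function $f$ is even and satisfies $f(r+1)=-f(r)$. *)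

From Stdlib Require Import Reals.
From Coquelicot Require Import Coquelicot.
Open Scope R_scope.

Definition sec (x : R) : R := / cos x.

Definition f_term (r : R) (k : nat) : R :=
  4 / PI ^ 2 * (sec ((2 * INR k + 1) * PI * r) / (2 * INR k + 1) ^ 2).

From Stdlib Require Import Reals Lra Lia.
From Coquelicot Require Import Coquelicot.
Open Scope R_scope.

(* For q = 4p (resp. q = 2P+1) and θ = (2k+1)π/q we have cos (4pθ) = -1 (resp. cos (qθ) = -1),
   and the telescoping identity
     2 cos θ · Σ_{i<M} (-1)^i cos ((2i+1)θ) = 1 - (-1)^M cos (2Mθ)
   writes sec θ as a finite alternating sum of the cos ((2i+1)θ) = cos ((2k+1) x_i), where
   x_i = (2i+1)π/q.  Summing over k, f(1/q) becomes the same alternating combination of the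
   Fourier series Σ_k cos ((2k+1)x) / (2k+1)^2 = π(π - 2x)/8 at the points x_i (and at x = 0),
   and the values come from summing this linear function of x.  The Fourier series is proved
   on (0, π) from its partial sums, using the mean value theorem and the Leibniz series for π/4;
   its value at 0 then follows from its value at 2π/3.  For q = 4p+2, the argument (2k+1)π/q
   equals (2N+1)π/2 whenever k = (2p+1)N + p. *)

Fixpoint sum_lt (g : nat -> R) (n : nat) : R :=
  match n with O => 0 | S m => sum_lt g m + g m end.

Lemma sum_lt_ext g h n :
  (forall i, (i < n)%nat -> g i = h i) -> sum_lt g n = sum_lt h n.
Proof.
  induction n as [|n IH]; intros H; cbn [sum_lt]; [reflexivity|].
  rewrite IH, H; auto with arith.
Qed.

Lemma sum_lt_scal c g n : sum_lt (fun i => c * g i) n = c * sum_lt g n.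
Proof. induction n as [|n IH]; cbn [sum_lt]; [ring|]. rewrite IH; ring. Qed.

Lemma sum_lt_S_sum_n g n : sum_lt g (S n) = sum_n g n.
Proof.
  rewrite sum_n_Reals.
  induction n as [|n IH]; cbn [sum_lt sum_f_R0] in *; [ring|]. now rewrite IH.
Qed.

Lemma is_series_sum_lt a l : is_series a l <-> is_lim_seq (sum_lt a) l.
Proof.
  rewrite (is_lim_seq_incr_1 (sum_lt a)).
  assert (E : forall n, sum_n a n = sum_lt a (S n)) by now intros; rewrite sum_lt_S_sum_n.
  split; intros H.
  - apply (is_lim_seq_ext (sum_n a)); [exact E | exact H].
  - apply (is_lim_seq_ext _ (sum_n a)) in H; [exact H | now intros].
Qed.

Lemma is_series_sum_lt_comm (g : nat -> nat -> R) (l : nat -> R) n :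
  (forall i, (i < n)%nat -> is_series (g i) (l i)) ->
  is_series (fun k => sum_lt (fun i => g i k) n) (sum_lt l n).
Proof.
  induction n as [|n IH]; intros H; cbn [sum_lt].
  - apply is_series_sum_lt, (is_lim_seq_ext (fun _ => 0)).
    + induction n as [|n IH]; cbn [sum_lt]; [reflexivity|]. rewrite <- IH; ring.
    + apply is_lim_seq_const.
  - apply (is_series_plus (V := R_NormedModule)); auto with arith.
Qed.

Lemma is_derive_sum_lt (g dg : nat -> R -> R) t n :
  (forall k, is_derive (g k) t (dg k t)) ->
  is_derive (fun u => sum_lt (fun k => g k u) n) t (sum_lt (fun k => dg k t) n).
Proof.
  intros H; induction n as [|n IH]; cbn [sum_lt].
  - apply (is_derive_const (K := R_AbsRing) 0).
  - now apply (is_derive_plus (fun u => sum_lt (fun k => g k u) n) (g n)).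
Qed.

Lemma odd_INR_pos k : 0 < 2 * INR k + 1.
Proof. pose proof (pos_INR k); lra. Qed.

Lemma cos_INR_mult_PI k : cos (INR k * PI) = (-1) ^ k.
Proof.
  induction k as [|k IH]; [now rewrite Rmult_0_l, cos_0|].
  rewrite S_INR, Rmult_plus_distr_r, Rmult_1_l, neg_cos, IH; simpl; ring.
Qed.

Lemma cos_odd_mult_PI k : cos ((2 * INR k + 1) * PI) = -1.
Proof.
  replace ((2 * INR k + 1) * PI) with (PI + 2 * INR k * PI) by ring.
  now rewrite cos_period, cos_PI.
Qed.

Lemma cos_odd_mult_PI2 k : cos ((2 * INR k + 1) * (PI / 2)) = 0.
Proof.
  apply cos_eq_0_1; exists (Z.of_nat k).
  rewrite <- INR_IZR_INZ; field.
Qed.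

Lemma sin_odd_mult_PI2 k : sin ((2 * INR k + 1) * (PI / 2)) = (-1) ^ k.
Proof.
  replace ((2 * INR k + 1) * (PI / 2)) with (PI / 2 + INR k * PI) by field.
  now rewrite sin_plus, cos_PI2, sin_PI2, cos_INR_mult_PI, Rmult_0_l, Rplus_0_r, Rmult_1_l.
Qed.

Lemma cos_mul_alt_sum_cos_odd th M :
  2 * cos th * sum_lt (fun i => (-1) ^ i * cos ((2 * INR i + 1) * th)) M
  = 1 - (-1) ^ M * cos (2 * INR M * th).
Proof.
  induction M as [|M IH]; cbn [sum_lt pow].
  - replace (2 * INR 0 * th) with 0 by (simpl; ring); rewrite cos_0; ring.
  - rewrite Rmult_plus_distr_l, IH, S_INR.
    replace (2 * INR M * th) with ((2 * INR M + 1) * th - th) by ring.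
    replace (2 * (INR M + 1) * th) with ((2 * INR M + 1) * th + th) by ring.
    rewrite cos_minus, cos_plus; ring.
Qed.

Lemma sin_mul_sum_cos_odd t N :
  2 * sin t * sum_lt (fun k => cos ((2 * INR k + 1) * t)) N = sin (2 * INR N * t).
Proof.
  induction N as [|N IH]; cbn [sum_lt].
  - replace (2 * INR 0 * t) with 0 by (simpl; ring); rewrite sin_0; ring.
  - rewrite Rmult_plus_distr_l, IH, S_INR.
    replace (2 * INR N * t) with ((2 * INR N + 1) * t - t) by ring.
    replace (2 * (INR N + 1) * t) with ((2 * INR N + 1) * t + t) by ring.
    rewrite sin_minus, sin_plus; ring.
Qed.

Lemma sec_alt_sum_even th p :
  cos (4 * INR p * th) = -1 ->
  sec th = sum_lt (fun i => (-1) ^ i * cos ((2 * INR i + 1) * th)) (2 * p).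
Proof.
  intros Hc.
  assert (H := cos_mul_alt_sum_cos_odd th (2 * p)).
  rewrite pow_1_even, mult_INR in H.
  replace (2 * (INR 2 * INR p) * th) with (4 * INR p * th) in H by (simpl; ring).
  rewrite Hc in H.
  assert (Hc0 : cos th <> 0) by (intros E; rewrite E in H; lra).
  unfold sec; apply (Rmult_eq_reg_l (cos th)); [|exact Hc0].
  rewrite Rinv_r by exact Hc0; lra.
Qed.

Lemma sec_alt_sum_odd th P :
  cos ((2 * INR P + 1) * th) = -1 ->
  sec th = 2 * sum_lt (fun i => (-1) ^ i * cos ((2 * INR i + 1) * th)) P - (-1) ^ P.
Proof.
  intros Hc.
  assert (Hs : sin ((2 * INR P + 1) * th) = 0).
  { pose proof (sin2_cos2 ((2 * INR P + 1) * th)) as E.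
    rewrite Hc in E; unfold Rsqr in E. nra. }
  assert (Hc2 : cos (2 * INR P * th) = - cos th).
  { replace (2 * INR P * th) with ((2 * INR P + 1) * th - th) by ring.
    rewrite cos_minus, Hc, Hs; ring. }
  assert (H := cos_mul_alt_sum_cos_odd th P).
  rewrite Hc2 in H.
  assert (Hc0 : cos th <> 0) by (intros E; rewrite E in H; lra).
  unfold sec; apply (Rmult_eq_reg_l (cos th)); [|exact Hc0].
  rewrite Rinv_r by exact Hc0; lra.
Qed.

Definition cos_odd_sq (x : R) (k : nat) : R :=
  cos ((2 * INR k + 1) * x) / (2 * INR k + 1) ^ 2.

Definition sin_odd (x : R) (k : nat) : R :=
  sin ((2 * INR k + 1) * x) / (2 * INR k + 1).

Lemma is_derive_sum_cos_odd_sq N t :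
  is_derive (fun u => sum_lt (cos_odd_sq u) N) t (- sum_lt (sin_odd t) N).
Proof.
  replace (- sum_lt (sin_odd t) N) with (sum_lt (fun k => -1 * sin_odd t k) N)
    by (rewrite sum_lt_scal; ring).
  apply (is_derive_sum_lt (fun k u => cos_odd_sq u k) (fun k u => -1 * sin_odd u k)).
  intros k; unfold cos_odd_sq, sin_odd; pose proof (odd_INR_pos k).
  auto_derive; [auto | field; lra].
Qed.

Lemma is_derive_sum_sin_odd N t :
  is_derive (fun u => sum_lt (sin_odd u) N) t
    (sum_lt (fun k => cos ((2 * INR k + 1) * t)) N).
Proof.
  apply (is_derive_sum_lt (fun k u => sin_odd u k) (fun k u => cos ((2 * INR k + 1) * u))).
  intros k; unfold sin_odd; pose proof (odd_INR_pos k).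
  auto_derive; [auto | field; lra].
Qed.

Lemma Rabs_sub_le_of_derive_bound (f df : R -> R) lo hi M x y :
  (forall c, lo <= c <= hi -> is_derive f c (df c) /\ Rabs (df c) <= M) ->
  lo <= x <= hi -> lo <= y <= hi -> Rabs (f y - f x) <= M * Rabs (y - x).
Proof.
  intros H Hx Hy.
  assert (Hin : forall c, Rmin x y <= c <= Rmax x y -> lo <= c <= hi).
  { intros c [H1 H2]; split.
    - apply Rle_trans with (Rmin x y); [apply Rmin_glb|]; lra.
    - apply Rle_trans with (Rmax x y); [|apply Rmax_lub]; lra. }
  destruct (MVT_abs f df x y) as [c [E Hc]].
  - intros c Hc; apply is_derive_Reals, H, Hin, Hc.
  - rewrite E; apply Rmult_le_compat_r; [apply Rabs_pos|]. apply H, Hin, Hc.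
Qed.

Lemma sin_le_sin_sym a c : 0 < a -> a <= c <= PI - a -> sin a <= sin c.
Proof.
  intros Ha Hc; pose proof PI_RGT_0.
  destruct (Rle_dec c (PI / 2)).
  - apply sin_incr_1; lra.
  - rewrite <- (sin_PI_x c); apply sin_incr_1; lra.
Qed.

Lemma Rabs_div_le_inv u d e : Rabs u <= 1 -> 0 < d <= e -> Rabs (u / e) <= / d.
Proof.
  intros Hu Hd; unfold Rdiv.
  rewrite Rabs_mult, Rabs_inv, (Rabs_pos_eq e) by lra.
  rewrite <- (Rmult_1_l (/ d)).
  apply Rmult_le_compat; auto using Rabs_pos.
  - left; apply Rinv_0_lt_compat; lra.
  - apply Rinv_le_contravar; lra.
Qed.

Lemma Rabs_cos_le_1 x : Rabs (cos x) <= 1.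
Proof. apply Rabs_le, COS_bound. Qed.

Lemma sum_cos_odd_sq_PI2 N : sum_lt (cos_odd_sq (PI / 2)) N = 0.
Proof.
  induction N as [|N IH]; cbn [sum_lt]; [reflexivity|].
  rewrite IH; unfold cos_odd_sq; rewrite cos_odd_mult_PI2; unfold Rdiv; ring.
Qed.

Section PartialSumBounds.

Variables (a : R) (N : nat).
Hypotheses (a_pos : 0 < a) (a_le : a <= PI / 2) (N_pos : (0 < N)%nat).

Lemma sin_sq_lower_bound t :
  a <= t <= PI - a -> 0 < sin a ^ 2 /\ sin a ^ 2 <= sin t /\ sin a ^ 2 <= sin t ^ 2.
Proof.
  intros Ht; pose proof PI_RGT_0.
  assert (Hm : 0 < sin a) by (apply sin_gt_0; lra).
  pose proof (SIN_bound a); pose proof (sin_le_sin_sym a t a_pos Ht).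
  simpl; nra.
Qed.

Let sin_odd_corrected t := sum_lt (sin_odd t) N + cos (2 * INR N * t) / (4 * INR N * sin t).

(* The added term is the boundary term of integrating the Dirichlet kernel
   sin (2 N t) / (2 sin t) by parts; what is left has a derivative of size O(1/N). *)
Lemma is_derive_sin_odd_corrected t :
  sin t <> 0 ->
  is_derive sin_odd_corrected t (- cos (2 * INR N * t) * cos t / (4 * INR N * sin t ^ 2)).
Proof.
  intros Hs; assert (HN : 0 < INR N) by (apply lt_0_INR; lia).
  assert (Hq : is_derive (fun u => cos (2 * INR N * u) / (4 * INR N * sin u)) t
     ((- sin (2 * INR N * t) * (2 * INR N) * (4 * INR N * sin t)
       - cos (2 * INR N * t) * (4 * INR N * cos t)) / (4 * INR N * sin t) ^ 2)).
  { auto_derive.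
    - repeat split; auto. apply Rmult_integral_contrapositive; split; auto; lra.
    - field; split; auto; lra. }
  replace (- cos (2 * INR N * t) * cos t / (4 * INR N * sin t ^ 2)) with
    (plus (sum_lt (fun k => cos ((2 * INR k + 1) * t)) N)
       ((- sin (2 * INR N * t) * (2 * INR N) * (4 * INR N * sin t)
         - cos (2 * INR N * t) * (4 * INR N * cos t)) / (4 * INR N * sin t) ^ 2)).
  - exact (is_derive_plus _ _ _ _ _ (is_derive_sum_sin_odd N t) Hq).
  - rewrite <- sin_mul_sum_cos_odd; unfold plus; simpl; field; lra.
Qed.

Lemma sum_sin_odd_near_PI2 c :
  a <= c <= PI - a ->
  Rabs (sum_lt (sin_odd c) N - sum_lt (sin_odd (PI / 2)) N) <= / (INR N * sin a ^ 2).
Proof.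
  intros Hc; pose proof PI_RGT_0 as Hpi; pose proof PI_4 as Hpi4.
  assert (HN : 0 < INR N) by (apply lt_0_INR; lia).
  assert (Hs : 0 < sin a) by (apply sin_gt_0; lra).
  assert (Hsa : 0 < sin a ^ 2) by (apply pow_lt, Hs).
  set (B := / (4 * INR N * sin a ^ 2)).
  assert (Hend : forall t, a <= t <= PI - a ->
            Rabs (cos (2 * INR N * t) / (4 * INR N * sin t)) <= B).
  { intros t Ht; destruct (sin_sq_lower_bound t Ht) as (H0 & H1 & _).
    apply Rabs_div_le_inv; [apply Rabs_cos_le_1 | split; nra]. }
  assert (Hmid : Rabs (sin_odd_corrected c - sin_odd_corrected (PI / 2)) <= B * Rabs (c - PI / 2)).
  { apply (Rabs_sub_le_of_derive_bound sin_odd_corrected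
             (fun t => - cos (2 * INR N * t) * cos t / (4 * INR N * sin t ^ 2)) a (PI - a));
      [|lra|lra].
    intros t Ht; destruct (sin_sq_lower_bound t Ht) as (H0 & H1 & H2); split.
    - apply is_derive_sin_odd_corrected; lra.
    - apply Rabs_div_le_inv; [|split; nra].
      rewrite Rabs_mult, Rabs_Ropp, <- (Rmult_1_l 1).
      apply Rmult_le_compat; auto using Rabs_pos, Rabs_cos_le_1. }
  assert (Hdist : B * Rabs (c - PI / 2) <= B * 2).
  { apply Rmult_le_compat_l.
    - unfold B; left; apply Rinv_0_lt_compat; nra.
    - apply Rabs_le; lra. }
  replace (/ (INR N * sin a ^ 2)) with (4 * B)
    by (unfold B; field; split; lra).
  unfold sin_odd_corrected in Hmid.
  apply Rabs_le_between in Hmid; pose proof (Hend c Hc) as Hc'; pose proof (Hend (PI / 2)) as Hp.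
  apply Rabs_le_between in Hc'; apply Rabs_le_between in Hp; [|lra].
  apply Rabs_le; lra.
Qed.

Lemma sum_cos_odd_sq_near_line x :
  a <= x <= PI - a ->
  Rabs (sum_lt (cos_odd_sq x) N + (x - PI / 2) * sum_lt (sin_odd (PI / 2)) N)
  <= 2 / (INR N * sin a ^ 2).
Proof.
  intros Hx; pose proof PI_RGT_0 as Hpi; pose proof PI_4 as Hpi4.
  set (T := sum_lt (sin_odd (PI / 2)) N).
  assert (Hpos : 0 < INR N * sin a ^ 2).
  { apply Rmult_lt_0_compat; [apply lt_0_INR; lia | apply (sin_sq_lower_bound a); lra]. }
  assert (H := Rabs_sub_le_of_derive_bound
    (fun t => sum_lt (cos_odd_sq t) N + (t - PI / 2) * T)
    (fun t => - sum_lt (sin_odd t) N + T) a (PI - a) (/ (INR N * sin a ^ 2)) (PI / 2) x).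
  cbv beta in H; rewrite sum_cos_odd_sq_PI2, Rminus_diag, Rmult_0_l, !Rplus_0_r, Rminus_0_r in H.
  eapply Rle_trans; [apply H; [|lra|lra]|].
  - intros t Ht; split.
    + apply (is_derive_plus (fun u => sum_lt (cos_odd_sq u) N) (fun u => (u - PI / 2) * T)).
      * apply is_derive_sum_cos_odd_sq.
      * auto_derive; [auto | ring].
    + rewrite <- Rabs_Ropp, Ropp_plus_distr, Ropp_involutive.
      apply sum_sin_odd_near_PI2; exact Ht.
  - unfold Rdiv; rewrite (Rmult_comm (/ _)); apply Rmult_le_compat_r.
    + left; apply Rinv_0_lt_compat, Hpos.
    + apply Rabs_le; lra.
Qed.

End PartialSumBounds.

Lemma is_series_sin_odd_PI2 : is_series (sin_odd (PI / 2)) (PI / 4).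
Proof.
  apply (is_series_ext (tg_alt PI_tg)).
  { intros k; unfold tg_alt, PI_tg, sin_odd.
    rewrite sin_odd_mult_PI2, plus_INR, mult_INR; simpl; field.
    pose proof (odd_INR_pos k); lra. }
  apply is_series_Reals.
  rewrite <- Alt_PI_eq; unfold Alt_PI; destruct exist_PI as [l Hl].
  replace (4 * l / 4) with l by field; exact Hl.
Qed.

Lemma is_lim_seq_inv_INR : is_lim_seq (fun n => / INR n) 0.
Proof. apply (is_lim_seq_inv INR p_infty); [apply is_lim_seq_INR | discriminate]. Qed.

Lemma is_series_cos_odd_sq x :
  0 < x < PI -> is_series (cos_odd_sq x) (PI * (PI - 2 * x) / 8).
Proof.
  intros Hx.
  set (a := Rmin x (PI - x)).
  assert (Ha : 0 < a <= PI / 2 /\ a <= x <= PI - a)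
    by (unfold a, Rmin; destruct Rle_dec; lra).
  assert (Hsa : 0 < sin a) by (apply sin_gt_0; lra).
  set (T := sum_lt (sin_odd (PI / 2))).
  set (e := fun N => sum_lt (cos_odd_sq x) N + (x - PI / 2) * T N).
  assert (He : is_lim_seq e 0).
  { apply is_lim_seq_abs_0.
    apply (is_lim_seq_le_le_loc (fun _ => 0) _ (fun N => 2 / sin a ^ 2 * / INR N)).
    - exists 1%nat; intros N HN; split; [apply Rabs_pos|].
      assert (0 < INR N) by (apply lt_0_INR; lia).
      replace (2 / sin a ^ 2 * / INR N) with (2 / (INR N * sin a ^ 2)) by (field; lra).
      apply sum_cos_odd_sq_near_line; lra || lia.
    - apply is_lim_seq_const.
    - replace (Finite 0) with (Rbar_mult (2 / sin a ^ 2) 0) by (simpl; f_equal; ring).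
      apply is_lim_seq_scal_l, is_lim_seq_inv_INR. }
  apply is_series_sum_lt.
  apply (is_lim_seq_ext (fun N => e N + (PI / 2 - x) * T N)); [intros N; unfold e; ring|].
  replace (PI * (PI - 2 * x) / 8) with (0 + (PI / 2 - x) * (PI / 4)) by field.
  apply (is_lim_seq_plus' _ _ 0 ((PI / 2 - x) * (PI / 4))); [exact He|].
  apply (is_lim_seq_scal_l _ (PI / 2 - x) (PI / 4)).
  apply is_series_sum_lt, is_series_sin_odd_PI2.
Qed.

Lemma cos_odd_sq_0 k : cos_odd_sq 0 k = / (2 * INR k + 1) ^ 2.
Proof. unfold cos_odd_sq; rewrite Rmult_0_r, cos_0; apply Rmult_1_l. Qed.

Lemma ex_series_cos_odd_sq_0 : ex_series (cos_odd_sq 0).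
Proof.
  apply (ex_series_le (K := R_AbsRing) (V := R_CompleteNormedModule) _
           (fun k => 2 * (/ INR (S k) - / INR (S (S k))))).
  - intros k; change (norm (cos_odd_sq 0 k)) with (Rabs (cos_odd_sq 0 k)).
    rewrite cos_odd_sq_0, !S_INR.
    pose proof (pos_INR k) as Hk.
    rewrite Rabs_pos_eq by (apply Rlt_le, Rinv_0_lt_compat, pow_lt; lra).
    replace (2 * (/ (INR k + 1) - / (INR k + 1 + 1)))
      with (/ ((INR k + 1) * (INR k + 2) / 2)) by (field; lra).
    apply Rinv_le_contravar; nra.
  - exists 2; apply is_series_sum_lt.
    apply (is_lim_seq_ext (fun N => 2 - 2 * / INR (S N))).
    + induction n as [|n IH]; cbn [sum_lt].
      * simpl; field.
      * rewrite <- IH, !S_INR; pose proof (pos_INR n); field; lra.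
    + replace 2 with (2 - 2 * 0) at 1 by ring.
      apply is_lim_seq_minus'; [apply is_lim_seq_const|].
      apply (is_lim_seq_scal_l _ 2 0), (is_lim_seq_incr_1 (fun n => / INR n)), is_lim_seq_inv_INR.
Qed.

(* At 2π/3 the cosines run through -1/2, 1, -1/2, so in each block of three consecutive
   terms only the middle one survives, tripled, and 3 (6j + 3)^-2 = (2j + 1)^-2 / 3. *)
Lemma sum_lt_cos_odd_sq_blocks N :
  sum_lt (fun k => cos_odd_sq 0 k + 2 * cos_odd_sq (2 * PI / 3) k) (3 * N)
  = sum_lt (cos_odd_sq 0) N / 3.
Proof.
  induction N as [|N IH]; [simpl; field|].
  replace (3 * S N)%nat with (S (S (S (3 * N)))) by lia; cbn [sum_lt].
  rewrite IH, !cos_odd_sq_0; unfold cos_odd_sq.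
  assert (E2 : INR (2 * N) = 2 * INR N) by (rewrite mult_INR; reflexivity).
  assert (E3 : INR (3 * N) = 3 * INR N) by (rewrite mult_INR; simpl; ring).
  rewrite !S_INR, E3; pose proof (pos_INR N).
  replace ((2 * (3 * INR N) + 1) * (2 * PI / 3))
    with (2 * PI / 3 + 2 * INR (2 * N) * PI) by (rewrite E2; field).
  replace ((2 * (3 * INR N + 1) + 1) * (2 * PI / 3))
    with (0 + 2 * INR (2 * N + 1) * PI) by (rewrite plus_INR, E2; simpl; field).
  replace ((2 * (3 * INR N + 1 + 1) + 1) * (2 * PI / 3))
    with (PI / 3 + PI + 2 * INR (2 * N + 1) * PI) by (rewrite plus_INR, E2; simpl; field).
  assert (H2PI3 : cos (2 * PI / 3) = - (1 / 2)).
  { replace (2 * PI / 3) with (PI - PI / 3) by field.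
    rewrite Rtrigo_facts.cos_pi_minus, cos_PI3; ring. }
  rewrite !cos_period, H2PI3, neg_cos, cos_PI3, cos_0.
  field; lra.
Qed.

Lemma is_series_cos_odd_sq_0 : is_series (cos_odd_sq 0) (PI ^ 2 / 8).
Proof.
  destruct ex_series_cos_odd_sq_0 as [A HA].
  assert (HB : is_series (cos_odd_sq (2 * PI / 3)) (PI * (PI - 2 * (2 * PI / 3)) / 8)).
  { apply is_series_cos_odd_sq; pose proof PI_RGT_0; lra. }
  assert (Hblocks : is_lim_seq (fun N => sum_lt (cos_odd_sq 0) N / 3)
                      (A + 2 * (PI * (PI - 2 * (2 * PI / 3)) / 8))).
  { apply (is_lim_seq_ext _ _ _ sum_lt_cos_odd_sq_blocks).
    apply (is_lim_seq_subseq _ _ (fun N => 3 * N)%nat).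
    - apply eventually_subseq; intros; lia.
    - apply is_series_sum_lt.
      apply (is_series_plus (V := R_NormedModule)); [exact HA|].
      apply (is_series_scal (V := R_NormedModule)), HB. }
  assert (Hthird : is_lim_seq (fun N => sum_lt (cos_odd_sq 0) N / 3) (A / 3)).
  { apply (is_lim_seq_ext (fun N => / 3 * sum_lt (cos_odd_sq 0) N)); [intros; unfold Rdiv; ring|].
    replace (A / 3) with (/ 3 * A) by (unfold Rdiv; ring).
    apply (is_lim_seq_scal_l _ (/ 3) A), is_series_sum_lt, HA. }
  assert (E := is_lim_seq_unique _ _ Hblocks); rewrite (is_lim_seq_unique _ _ Hthird) in E.
  injection E; intros E'.
  replace (PI ^ 2 / 8) with A by nra; exact HA.
Qed.

Definition alt_cos_odd_sq (r : R) (M k : nat) : R :=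
  sum_lt (fun i => (-1) ^ i * cos_odd_sq ((2 * INR i + 1) * PI * r) k) M.

Lemma alt_sum_cos_div_sq r M k :
  sum_lt (fun i => (-1) ^ i * cos ((2 * INR i + 1) * ((2 * INR k + 1) * PI * r))) M
    / (2 * INR k + 1) ^ 2
  = alt_cos_odd_sq r M k.
Proof.
  unfold alt_cos_odd_sq, Rdiv; rewrite Rmult_comm, <- sum_lt_scal.
  apply sum_lt_ext; intros i _; unfold cos_odd_sq.
  replace ((2 * INR k + 1) * ((2 * INR i + 1) * PI * r))
    with ((2 * INR i + 1) * ((2 * INR k + 1) * PI * r)) by ring.
  pose proof (odd_INR_pos k); field; lra.
Qed.

Lemma sum_alt_fourier_values r M :
  sum_lt (fun i => (-1) ^ i * (PI * (PI - 2 * ((2 * INR i + 1) * PI * r)) / 8)) M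
  = PI ^ 2 / 8 * ((1 - (-1) ^ M) / 2 + 2 * (-1) ^ M * INR M * r).
Proof.
  induction M as [|M IH]; cbn [sum_lt]; [simpl; field|].
  rewrite IH, S_INR; simpl pow; field.
Qed.

Lemma is_series_alt_cos_odd_sq r M :
  0 < r -> 2 * INR M * r <= 1 ->
  is_series (alt_cos_odd_sq r M)
    (PI ^ 2 / 8 * ((1 - (-1) ^ M) / 2 + 2 * (-1) ^ M * INR M * r)).
Proof.
  intros Hr HM; rewrite <- sum_alt_fourier_values.
  apply (is_series_sum_lt_comm (fun i k => (-1) ^ i * cos_odd_sq ((2 * INR i + 1) * PI * r) k)).
  intros i Hi; apply (is_series_scal (V := R_NormedModule)), is_series_cos_odd_sq.
  apply le_INR in Hi; rewrite S_INR in Hi.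
  pose proof PI_RGT_0; pose proof (odd_INR_pos i).
  assert ((INR i + 1) * r <= INR M * r) by (apply Rmult_le_compat_r; lra).
  assert (0 < (2 * INR i + 1) * r) by (apply Rmult_lt_0_compat; lra).
  assert ((2 * INR i + 1) * r < 1) by lra.
  split; nra.
Qed.

Lemma f_term_mult4 p k :
  (0 < p)%nat ->
  f_term (1 / INR (4 * p)) k = 4 / PI ^ 2 * alt_cos_odd_sq (1 / INR (4 * p)) (2 * p) k.
Proof.
  intros Hp; assert (0 < INR p) by (apply lt_0_INR; lia).
  unfold f_term; rewrite (sec_alt_sum_even _ p), alt_sum_cos_div_sq; [reflexivity|].
  replace (4 * INR p * ((2 * INR k + 1) * PI * (1 / INR (4 * p))))
    with ((2 * INR k + 1) * PI) by (rewrite mult_INR; simpl; field; lra).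
  apply cos_odd_mult_PI.
Qed.

Lemma f_term_odd P k :
  f_term (1 / INR (2 * P + 1)) k
  = 4 / PI ^ 2 * (2 * alt_cos_odd_sq (1 / INR (2 * P + 1)) P k - (-1) ^ P * cos_odd_sq 0 k).
Proof.
  assert (0 < INR (2 * P + 1)) by (apply lt_0_INR; lia).
  unfold f_term; rewrite (sec_alt_sum_odd _ P), cos_odd_sq_0, <- alt_sum_cos_div_sq.
  - pose proof (odd_INR_pos k); field; split; [lra | apply PI_neq0].
  - replace ((2 * INR P + 1) * ((2 * INR k + 1) * PI * (1 / INR (2 * P + 1))))
      with ((2 * INR k + 1) * PI) by (rewrite plus_INR, mult_INR in *; simpl in *; field; lra).
    apply cos_odd_mult_PI.
Qed.

Lemma is_series_f_term_mult4 p :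
  (0 < p)%nat -> is_series (f_term (1 / INR (4 * p))) (1 / 2).
Proof.
  intros Hp; assert (0 < INR p) by (apply lt_0_INR; lia).
  apply (is_series_ext (fun k => 4 / PI ^ 2 * alt_cos_odd_sq (1 / INR (4 * p)) (2 * p) k)).
  { intros k; symmetry; apply f_term_mult4, Hp. }
  replace (1 / 2) with (4 / PI ^ 2 * (PI ^ 2 / 8 * ((1 - (-1) ^ (2 * p)) / 2
                        + 2 * (-1) ^ (2 * p) * INR (2 * p) * (1 / INR (4 * p))))).
  - apply (is_series_scal (V := R_NormedModule)), is_series_alt_cos_odd_sq;
      rewrite !mult_INR; simpl.
    + apply Rdiv_lt_0_compat; lra.
    + apply Req_le; field; lra.
  - rewrite pow_1_even, !mult_INR; simpl; field; split; [lra | apply PI_neq0].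
Qed.

Lemma is_series_f_term_odd P :
  is_series (f_term (1 / INR (2 * P + 1))) (1 / 2 - (-1) ^ P / INR (2 * P + 1)).
Proof.
  assert (Hq : INR (2 * P + 1) = 2 * INR P + 1) by (rewrite plus_INR, mult_INR; simpl; ring).
  pose proof (pos_INR P).
  assert (Hr : 0 < 1 / INR (2 * P + 1)) by (rewrite Hq; apply Rdiv_lt_0_compat; lra).
  apply (is_series_ext (fun k => 4 / PI ^ 2 *
           (2 * alt_cos_odd_sq (1 / INR (2 * P + 1)) P k - (-1) ^ P * cos_odd_sq 0 k))).
  { intros k; symmetry; apply f_term_odd. }
  replace (1 / 2 - (-1) ^ P / INR (2 * P + 1)) with (4 / PI ^ 2 *
    (2 * (PI ^ 2 / 8 * ((1 - (-1) ^ P) / 2 + 2 * (-1) ^ P * INR P * (1 / INR (2 * P + 1))))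
     - (-1) ^ P * (PI ^ 2 / 8))).
  - apply (is_series_scal (V := R_NormedModule)), (is_series_minus (V := R_NormedModule)).
    + apply (is_series_scal (V := R_NormedModule)), is_series_alt_cos_odd_sq; [exact Hr|].
      replace (2 * INR P * (1 / INR (2 * P + 1))) with (1 - 1 / INR (2 * P + 1))
        by (rewrite Hq; field; lra).
      lra.
    + apply (is_series_scal (V := R_NormedModule)), is_series_cos_odd_sq_0.
  - rewrite Hq; field; split; [lra | apply PI_neq0].
Qed.

Lemma cos_odd_mult_PI_div_4p2_eq_0 p N :
  cos ((2 * INR ((2 * p + 1) * N + p) + 1) * PI * (1 / INR (2 * (2 * p + 1)))) = 0.
Proof.
  assert (E : INR (2 * p + 1) = 2 * INR p + 1) by (rewrite plus_INR, mult_INR; simpl; ring).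
  pose proof (pos_INR p).
  replace ((2 * INR ((2 * p + 1) * N + p) + 1) * PI * (1 / INR (2 * (2 * p + 1))))
    with ((2 * INR N + 1) * (PI / 2))
    by (rewrite plus_INR, !mult_INR, E; simpl; field; lra).
  apply cos_odd_mult_PI2.
Qed.

Theorem theorem3p1 (q : nat) (hq : (0 < q)%nat) :
  ((q mod 4 = 0)%nat -> is_series (f_term (1 / INR q)) (1 / 2)) /\
  ((q mod 4 = 1)%nat -> is_series (f_term (1 / INR q)) (1 / 2 - 1 / INR q)) /\
  ((q mod 4 = 2)%nat ->
     forall N : nat, exists k : nat, (N <= k)%nat /\
       cos ((2 * INR k + 1) * PI * (1 / INR q)) = 0) /\
  ((q mod 4 = 3)%nat -> is_series (f_term (1 / INR q)) (1 / 2 + 1 / INR q)).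
Proof.
  pose proof (Nat.div_mod_eq q 4) as Hq; set (p := (q / 4)%nat) in Hq.
  split; [|split; [|split]]; intros Hr; rewrite Hr in Hq.
  - replace q with (4 * p)%nat by lia.
    apply is_series_f_term_mult4; lia.
  - replace q with (2 * (2 * p) + 1)%nat by lia.
    replace (1 / 2 - 1 / INR (2 * (2 * p) + 1))
      with (1 / 2 - (-1) ^ (2 * p) / INR (2 * (2 * p) + 1)) by now rewrite pow_1_even.
    apply is_series_f_term_odd.
  - intros N; exists ((2 * p + 1) * N + p)%nat; split; [lia|].
    replace q with (2 * (2 * p + 1))%nat by lia.
    apply cos_odd_mult_PI_div_4p2_eq_0.
  - replace q with (2 * (2 * p + 1) + 1)%nat by lia.
    replace (1 / 2 + 1 / INR (2 * (2 * p + 1) + 1))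
      with (1 / 2 - (-1) ^ (2 * p + 1) / INR (2 * (2 * p + 1) + 1))
      by (rewrite pow_add, pow_1_even; simpl; field; apply not_0_INR; lia).
    apply is_series_f_term_odd.
Qed.
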